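(* Consider Setting A with all nodes running Algorithm 1, and suppose the graph sequence satisfies conditions (C1) and (C3). Then for every sub-state $j$, every $i\in\mathcal V$ and every $k\ge t_{N-1}$, $$\tau^{(j)}_i[k]\le 2(N-1)\,g(k),$$ where $g(k)=f(m(k))$ with $m(k)=\max\{t_q\in\mathbb I:t_q\le k\}$ and $f(t_q)=t_{q+1}-t_q$.
   Context: Setting A. Consider the discrete-time LTI system $x[k+1]=Ax[k]$, $k\in\mathbb N$, with $A\in\mathbb R^{n\times n}$, monitored by $N$ nodes $\mathcal V=\{1,\dots,N\}$; node $i$ measures $y_i[k]=C_ix[k]$ with $C_i\in\mathbb R^{r_i\times n}$. Let $C=[C_1^T\ \cdots\ C_N^T]^T$ and assume $(A,C)$ is observable. Fix an invertible $T$ such that $\bar A=T^{-1}AT$ is block lower-triangular with diagonal blocks $A_{11},\dots,A_{NN}$ and off-diagonal blocks $A_{jq}$ ($q<j$), zero blocks above the diagonal, and $C_iT=[C_{i1}\ \cdots\ C_{ii}\ 0\ \cdots\ 0]$ for each $i$, with $(A_{jj},C_{jj})$ observable for every $j$ (such $T$ exists). With $z[k]=T^{-1}x[k]$ partitioned compatibly into sub-states $z^{(1)}[k],\dots,z^{(N)}[k]$, one has $z^{(j)}[k+1]=A_{jj}z^{(j)}[k]+\sum_{q=1}^{j-1}A_{jq}z^{(q)}[k]$ and $y_j[k]=\sum_{q=1}^{j}C_{jq}z^{(q)}[k]$. Node $j$ is called the source node of sub-state $j$. Communication: at each time $k$ there is a directed graph $\mathcal G[k]=(\mathcal V,\mathcal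 E[k])$; $(l,i)\in\mathcal E[k]$ means $l$ can send to $i$ at time $k$; $\mathcal N_i[k]=\{l\neq i:(l,i)\in\mathcal E[k]\}$. The union graph over $[k_1,k_2]$ has vertex set $\mathcal V$ and edge set $\bigcup_{\tau=k_1}^{k_2}\mathcal E[\tau]$. Algorithm 1 (run for every sub-state $j$ simultaneously). Each node $i$ keeps an estimate $\hat z^{(j)}_i[k]$ (arbitrary initial value) and a freshness index $\tau^{(j)}_i[k]\in\mathbb N\cup\{\omega\}$, where $\omega$ is a special symbol; initially $\tau^{(j)}_j[0]=0$ and $\tau^{(j)}_i[0]=\omega$ for $i\ne j$. Source node $j$: $\tau^{(j)}_j[k]=0$ for all $k$, and $\hat z^{(j)}_j[k+1]=(A_{jj}-L_jC_{jj})\hat z^{(j)}_j[k]+\sum_{q=1}^{j-1}(A_{jq}-L_jC_{jq})\hat z^{(q)}_j[k]+L_jy_j[k]$, where $L_j$ is an observer gain. Non-source node $i\neq j$ at time $k$: let $\mathcal M^{(j)}_i[k]=\{l\in\mathcal N_i[k]:\tau^{(j)}_l[k]\neq\omega\}$; if $\tau^{(j)}_i[k]=\omega$ let $\mathcal F^{(j)}_i[k]=\mathcal M^{(j)}_i[k]$, otherwise $\mathcal F^{(j)}_i[k]=\{l\in\mathcal M^{(j)}_i[k]:\tau^{(j)}_l[k]<\tau^{(j)}_i[k]\}$. If $\mathcal F^{(j)}_i[k]\ne\emptyset$, pick $u\in\arg\min_{l\in\mathcal F^{(j)}_i[k]}\tau^{(j)}_l[k]$ and set $\tau^{(j)}_i[k+1]=\tau^{(j)}_u[k]+1$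 and $\hat z^{(j)}_i[k+1]=A_{jj}\hat z^{(j)}_u[k]+\sum_{q=1}^{j-1}A_{jq}\hat z^{(q)}_i[k]$ (''$i$ adopts the information of $u$ at time $k$''). If $\mathcal F^{(j)}_i[k]=\emptyset$, set $\tau^{(j)}_i[k+1]=\omega$ if $\tau^{(j)}_i[k]=\omega$ and $\tau^{(j)}_i[k+1]=\tau^{(j)}_i[k]+1$ otherwise, and $\hat z^{(j)}_i[k+1]=A_{jj}\hat z^{(j)}_i[k]+\sum_{q=1}^{j-1}A_{jq}\hat z^{(q)}_i[k]$ (''$i$ adopts its own information''). Conditions on the graph sequence: there is an increasing sequence $\mathbb I=\{t_0,t_1,\dots\}\subset\mathbb N$ with $t_0=0$ such that, with $f(t_q)=t_{q+1}-t_q$: (C1) $f(t_q)$ is non-decreasing in $q$; (C3) for each $q$, the union graph over $[t_q,t_{q+1}-1]$ is strongly connected. *)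

From mathcomp Require Import all_boot.
Set Implicit Arguments. Unset Strict Implicit. Unset Printing Implicit Defensive.

(* Freshness index: [None] encodes the special symbol omega, [Some n] encodes n. *)
Definition findex := option nat.

(* Communication graphs: [E k l i] means (l,i) is in E[k], i.e. l can send to i
   at time k. Nodes are 'I_N. *)
Definition graph_seq (N : nat) := nat -> rel 'I_N.

Definition union_rel (N : nat) (E : graph_seq N) (k1 k2 : nat) : rel 'I_N :=
  fun l i => has (fun s => E s l i) (index_iota k1 k2.+1).

Definition strongly_connected (N : nat) (r : rel 'I_N) : Prop :=
  forall u v : 'I_N, connect r u v.

Definition omin (a b : findex) : findex :=
  match a, b with
  | None, _ => b
  | _, None => a
  | Some x, Some y => Some (minn x y)
  end.

Definition fresher (a b : findex) : bool :=
  match a, b with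
  | Some _, None => true
  | Some x, Some y => x < y
  | None, _ => false
  end.

Definition Fset (N : nat) (E : graph_seq N) (k : nat) (tau : 'I_N -> findex)
  (i : 'I_N) : seq 'I_N :=
  [seq l <- enum 'I_N | [&& l != i, E k l i & fresher (tau l) (tau i)]].

(* If F is nonempty, i adopts the
   information of a minimiser u, so tau_i[k+1] = tau_u[k] + 1 (the minimal value);
   otherwise omega stays omega and a number is incremented. *)
Definition tau_next (N : nat) (E : graph_seq N) (k : nat) (tau : 'I_N -> findex)
  (i : 'I_N) : findex :=
  let F := Fset E k tau i in
  if F is _ :: _ then omap S (foldr omin None (map tau F))
  else omap S (tau i).

(* tau E j k i = tau_i^{(j)}[k] under Algorithm 1 (source node j). *)
Fixpoint tau (N : nat) (E : graph_seq N) (j : 'I_N) (k : nat) : 'I_N -> findex :=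
  match k with
  | 0 => fun i => if i == j then Some 0 else None
  | k'.+1 => let p := tau E j k' in
             fun i => if i == j then Some 0 else tau_next E k' p i
  end.

From mathcomp Require Import all_boot.
From mathcomp Require Import zify.
Set Implicit Arguments. Unset Strict Implicit. Unset Printing Implicit Defensive.

(* Call a node informed after [s] at time [k] when its freshness index [n] is
   finite with [n + s <= k], i.e. its estimate stems from information the source
   produced at time [k - n >= s].  Informed nodes stay informed, and an informed
   node makes each of its out-neighbours informed one step later.  Fix a window
   [t p] of the graph sequence: by strong connectivity of the union graph over
   each subsequent window, some edge leaves the set informed after [t p], so
   this set gains a node per window and contains every node after [N - 1]
   windows.  Hence at any time [k] in window [q] every index is below
   [k - t (q - (N - 1))], which is less than [N] window lengths, each at most
   the current one by (C1). *)

Lemma foldr_omin_mem (s : seq (option nat)) n :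
  Some n \in s -> exists2 m, foldr omin None s = Some m & m <= n.
Proof.
elim: s => [|a s IH] //=; rewrite in_cons => /orP [/eqP <-|/IH [m -> le_mn]].
  by case: (foldr omin None s) => [m|] /=; [exists (minn n m); rewrite ?geq_minl|exists n].
case: a => [x|] /=; last by exists m.
by exists (minn x m) => //; rewrite (leq_trans (geq_minr x m)).
Qed.

Section NextIndex.

Variables (N : nat) (E : graph_seq N) (k : nat) (p : 'I_N -> option nat) (i : 'I_N).

Lemma mem_Fset l :
  (l \in Fset E k p i) = [&& l != i, E k l i & fresher (p l) (p i)].
Proof. by rewrite /Fset mem_filter mem_enum andbT. Qed.

Lemma tau_next_le_Fset l n : l \in Fset E k p i -> p l = Some n ->
  exists2 m, tau_next E k p i = Some m & m <= n.+1.
Proof.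
move=> lF pl; have /foldr_omin_mem [m def_m le_mn] : Some n \in map p (Fset E k p i).
  by apply/mapP; exists l.
by rewrite /tau_next; case: (Fset E k p i) lF def_m => // a F _ ->; exists m.+1.
Qed.

Lemma tau_next_le_self n : p i = Some n ->
  exists2 m, tau_next E k p i = Some m & m <= n.+1.
Proof.
move=> pi; case F_def: (Fset E k p i) => [|a F]; first by rewrite /tau_next F_def pi; exists n.+1.
have aF : a \in Fset E k p i by rewrite F_def mem_head.
move: (aF); rewrite mem_Fset pi => /and3P [_ _]; case pa: (p a) => [x|] //= lt_xn.
by have [m -> le_mx] := tau_next_le_Fset aF pa; exists m => //; lia.
Qed.

Lemma tau_next_le_neighbor l n : l != i -> E k l i -> p l = Some n ->
  exists2 m, tau_next E k p i = Some m & m <= n.+1.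
Proof.
move=> ne_li Eli pl; case fresh_l: (fresher (p l) (p i)).
  by apply: tau_next_le_Fset pl; rewrite mem_Fset ne_li Eli fresh_l.
move: fresh_l; rewrite pl; case pi: (p i) => [x|] //= /negbT; rewrite -leqNgt => le_xn.
by have [m -> le_mx] := tau_next_le_self pi; exists m => //; lia.
Qed.

End NextIndex.

Lemma tau_source N (E : graph_seq N) j k : tau E j k j = Some 0.
Proof. by case: k => [|k] /=; rewrite eqxx. Qed.

Definition informed N (E : graph_seq N) (j : 'I_N) (s k : nat) : {set 'I_N} :=
  [set i | if tau E j k i is Some n then n + s <= k else false].

Section Informed.

Variables (N : nat) (E : graph_seq N) (j : 'I_N) (s : nat).

Lemma informed_le k i : i \in informed E j s k -> s <= k.
Proof. by rewrite inE; case: (tau E j k i) => // n; lia. Qed.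

Lemma source_informed k : s <= k -> j \in informed E j s k.
Proof. by rewrite inE tau_source. Qed.

Lemma informed_succ k : informed E j s k \subset informed E j s k.+1.
Proof.
apply/subsetP => i i_inf; have le_sk := informed_le i_inf.
have [->|ne_ij] := eqVneq i j; first by apply: source_informed; lia.
move: i_inf; rewrite !inE /= (negbTE ne_ij); case tau_i: (tau E j k i) => [n|] // le_nk.
by have [m -> le_mn] := tau_next_le_self E k tau_i; lia.
Qed.

Lemma informed_homo : {homo informed E j s : k1 k2 / k1 <= k2 >-> k1 \subset k2}.
Proof. by apply: homo_leq => [A|A B C|k]; [exact: subxx|exact: subset_trans|exact: informed_succ]. Qed.

Lemma informed_neighbor k l i : l \in informed E j s k -> E k l i -> l != i ->
  i \in informed E j s k.+1.
Proof.
move=> l_inf Eli ne_li; have le_sk := informed_le l_inf.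
have [->|ne_ij] := eqVneq i j; first by apply: source_informed; lia.
move: l_inf; rewrite !inE /= (negbTE ne_ij); case tau_l: (tau E j k l) => [n|] // le_nk.
by have [m -> le_mn] := tau_next_le_neighbor ne_li Eli tau_l; lia.
Qed.

End Informed.

Lemma path_exit (T : Type) (r : rel T) (A : {pred T}) x p :
  path r x p -> x \in A -> last x p \notin A ->
  exists y z, [/\ r y z, y \in A & z \notin A].
Proof.
elim: p x => [|a p IH] x /=; first by move=> _ ->.
case/andP=> rxa path_p xA; case aA: (a \in A); first exact: IH.
by exists x, a; rewrite aA.
Qed.

Section Windows.

Variables (N : nat) (E : graph_seq N) (j : 'I_N) (t : nat -> nat).
Hypothesis t_incr : forall q, t q < t q.+1.
Hypothesis union_connected :
  forall q, strongly_connected (union_rel E (t q) (t q.+1).-1).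

Lemma t_mono : {mono t : a b / a <= b}.
Proof. by apply: leq_mono; apply: homo_ltn => // a b c; apply: ltn_trans. Qed.

Lemma informed_window_grows s q : s <= t q -> informed E j s (t q) != setT ->
  #|informed E j s (t q)| < #|informed E j s (t q.+1)|.
Proof.
move=> le_s_tq; rewrite -subTset => /subsetPn [v _ v_out].
have /connectP [p path_p v_last] := union_connected q j v.
have [x [y [Exy x_in y_out]]] :
  exists x y, [/\ union_rel E (t q) (t q.+1).-1 x y,
                  x \in informed E j s (t q) & y \notin informed E j s (t q)].
  by apply: path_exit path_p _ _; rewrite -?v_last ?source_informed.
case/hasP: Exy => r; rewrite mem_index_iota => /andP [le_tq_r lt_r] Exy.
have ne_xy : x != y by apply: contraNneq y_out => <-.
have x_in_r : x \in informed E j s r := subsetP (informed_homo E j s le_tq_r) x x_in.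
have y_in : y \in informed E j s (t q.+1).
  apply: subsetP (informed_neighbor x_in_r Exy ne_xy).
  by apply: informed_homo; have := t_incr q; lia.
apply: proper_card; apply/properP; split; last by exists y.
by apply: informed_homo; apply: ltnW.
Qed.

Lemma informed_card_windows p n :
  minn n.+1 N <= #|informed E j (t p) (t (p + n))|.
Proof.
elim: n => [|n IH].
  by rewrite geq_min card_gt0; apply/orP; left; apply/set0Pn; exists j; rewrite addn0 source_informed.
have le_tp : t p <= t (p + n) by rewrite t_mono leq_addr.
rewrite addnS; have [full|not_full] := eqVneq (informed E j (t p) (t (p + n))) setT.
  have := subset_leq_card (informed_homo E j (t p) (ltnW (t_incr (p + n)))).
  by rewrite full cardsT card_ord; lia.
by have := informed_window_grows le_tp not_full; lia.
Qed.

Lemma informed_after_windows p : informed E j (t p) (t (p + N.-1)) = setT.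
Proof.
apply/eqP; rewrite eqEcard subsetT cardsT card_ord /=.
by have := informed_card_windows p N.-1; rewrite prednK ?minnn // (leq_ltn_trans _ (ltn_ord j)).
Qed.

Hypothesis window_nondecr : forall q, t q.+1 - t q <= t q.+2 - t q.+1.

Lemma t_le_windows p m : t (p + m) <= t p + m * (t (p + m).+1 - t (p + m)).
Proof.
have gap_homo : {homo (fun q => t q.+1 - t q) : a b / a <= b}.
  by apply: homo_leq => // a b c; apply: leq_trans.
elim: m => [|m IH]; first by rewrite addn0 leq_addr.
have := gap_homo _ _ (leqnSn (p + m)); have := t_incr (p + m); have := t_incr (p + m).+1.
rewrite addnS; nia.
Qed.

End Windows.

Theorem mainTheorem7 (N : nat) (E : graph_seq N) (t : nat -> nat)
  (ht0 : t 0 = 0)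
  (htinc : forall q, t q < t q.+1)
  (hC1 : forall q, t q.+1 - t q <= t q.+2 - t q.+1)
  (hC3 : forall q, strongly_connected (union_rel E (t q) (t q.+1).-1)) :
  forall (j i : 'I_N) (k q : nat),
    t (N - 1) <= k ->
    t q <= k < t q.+1 ->
    exists n, tau E j k i = Some n /\ n <= 2 * (N - 1) * (t q.+1 - t q).
Proof.
move=> j i k q le_tN_k /andP [le_tq_k lt_k_tq1].
have [le_N1|lt1N] := leqP N 1.
  have -> : i = j by apply: ord_inj; have := ltn_ord i; have := ltn_ord j; lia.
  by exists 0; rewrite tau_source.
have le_Nq : N.-1 <= q.
  rewrite -ltnS ltnNge -(t_mono htinc) -ltnNge.
  by apply: leq_ltn_trans lt_k_tq1; rewrite -subn1.
pose p := q - N.-1; have def_q : p + N.-1 = q by rewrite subnK.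
have : i \in informed E j (t p) k.
  apply: subsetP (informed_homo E j _ le_tq_k) _ _.
  by rewrite -def_q (informed_after_windows j htinc hC3) inE.
rewrite inE; case: (tau E j k i) => [n|] // le_n_k; exists n; split=> //.
have := t_le_windows htinc hC1 p N.-1; rewrite def_q.
have : N * (t q.+1 - t q) <= 2 * (N - 1) * (t q.+1 - t q) by apply: leq_mul; lia.
nia.
Qed.
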